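(* Let $G$ be a TDLC-group, $H$ a closed subgroup of $G$, and $M$ a finitely generated projective discrete $\mathbb{Q}[G]$-module with filling norm $\|\cdot\|_M$. Regard $M$ as a discrete $\mathbb{Q}[H]$-module by restriction, and suppose $N$ is a finitely generated direct summand of $M$ in the category of discrete $\mathbb{Q}[H]$-modules. Then $N$ is undistorted with respect to $\|\cdot\|_M$: the restriction of $\|\cdot\|_M$ to $N$ is equivalent to the filling norm of $N$ as a $\mathbb{Q}[H]$-module.
   Context: A TDLC-group is a totally disconnected locally compact Hausdorff topological group. For a TDLC-group $G$, a discrete $\mathbb{Q}[G]$-module is a left $\mathbb{Q}[G]$-module in which every element has open stabilizer; restriction to a closed subgroup $H$ sends discrete $\mathbb{Q}[G]$-modules to discrete $\mathbb{Q}[H]$-modules and projectives to projectives. A $G$-set $\Omega$ is proper if all point stabilizers are compact open; $\mathbb{Q}[\Omega]$ is then a proper permutation module, finitely generated iff $\Omega/G$ is finite, with $\ell_1$-norm $\|\sum a_\omega\omega\|_1=\sum|a_\omega|$. For a finitely generated discrete module $M$ and a surjection $\partial:\mathbb{Q}[\Omega]\twoheadrightarrow M$ from a finitely generated proper permutation module, the filling pseudo-norm is $\|m\|_\partial=\inf\{\|x\|_1:\partial(x)=m\}$; it is unique up to equivalence (each bounded by a constant times the other) and is a norm when $M$ is projective. *)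

From Stdlib Require Import Reals ZArith ClassicalEpsilon.
From Stdlib Require List.
From HB Require Import structures.
From mathcomp Require Import all_boot all_algebra.

Set Implicit Arguments.
Unset Strict Implicit.
Unset Printing Implicit Defensive.

Import GRing.Theory.

Record TopGroup := {
  tg_car :> Type;
  tg_mul : tg_car -> tg_car -> tg_car;
  tg_one : tg_car;
  tg_inv : tg_car -> tg_car;
  tg_open : (tg_car -> Prop) -> Prop;
  tg_mulA : forall x y z, tg_mul x (tg_mul y z) = tg_mul (tg_mul x y) z;
  tg_mul1g : forall x, tg_mul tg_one x = x;
  tg_mulg1 : forall x, tg_mul x tg_one = x;
  tg_mulVg : forall x, tg_mul (tg_inv x) x = tg_one;
  tg_mulgV : forall x, tg_mul x (tg_inv x) = tg_one;
  tg_open_full : tg_open (fun _ => True);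
  tg_open_union : forall (I : Type) (U : I -> tg_car -> Prop),
      (forall i, tg_open (U i)) -> tg_open (fun x => exists i, U i x);
  tg_open_inter : forall U V, tg_open U -> tg_open V ->
      tg_open (fun x => U x /\ V x);
  tg_mul_cont : forall U x y, tg_open U -> U (tg_mul x y) ->
      exists V W, tg_open V /\ tg_open W /\ V x /\ W y /\
        (forall a b, V a -> W b -> U (tg_mul a b));
  tg_inv_cont : forall U, tg_open U -> tg_open (fun x => U (tg_inv x))
}.

Section Topology.
Variable G : TopGroup.

Definition compact (K : G -> Prop) : Prop :=
  forall (I : Type) (U : I -> G -> Prop),
    (forall i, tg_open (U i)) ->
    (forall x, K x -> exists i, U i x) ->
    exists l : list I, forall x, K x -> exists i, List.In i l /\ U i x.

Definition hausdorff : Prop :=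
  forall x y : G, x <> y -> exists U V, tg_open U /\ tg_open V /\ U x /\ V y /\
    (forall z, ~ (U z /\ V z)).

Definition locally_compact : Prop :=
  forall x : G, exists U K, tg_open U /\ U x /\ compact K /\ (forall z, U z -> K z).

Definition connected (S : G -> Prop) : Prop :=
  ~ exists U V, tg_open U /\ tg_open V /\
      (forall x, S x -> U x \/ V x) /\
      (exists x, S x /\ U x) /\ (exists x, S x /\ V x) /\
      (forall x, S x -> U x -> V x -> False).

Definition totally_disconnected : Prop :=
  forall S, connected S -> forall x y, S x -> S y -> x = y.

Definition TDLC : Prop := hausdorff /\ locally_compact /\ totally_disconnected.

Definition closed_subgroup (H : G -> Prop) : Prop :=
  H (tg_one G) /\ (forall x y, H x -> H y -> H (tg_mul x y)) /\
  (forall x, H x -> H (tg_inv x)) /\ tg_open (fun x => ~ H x).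

Definition wholeG : G -> Prop := fun _ => True.

Definition open_in (S U : G -> Prop) : Prop :=
  exists W, tg_open W /\ forall g, S g -> (U g <-> W g).

(* (the action is a map G -> V -> V of which only the values on S      *)
(* matter)                                                             *)

Local Open Scope ring_scope.

Definition is_action (S : G -> Prop) (X : Type) (a : G -> X -> X) : Prop :=
  (forall x, a (tg_one G) x = x) /\
  (forall g h x, S g -> S h -> a (tg_mul g h) x = a g (a h x)).

Definition dmodule (S : G -> Prop) (V : lmodType rat) (act : G -> V -> V) : Prop :=
  is_action S act /\
  (forall g, S g -> forall (c : rat) (u v : V), act g (c *: u + v) = c *: act g u + act g v) /\
  (forall v, open_in S (fun g => act g v = v)).

Definition dmorph (S : G -> Prop) (V W : lmodType rat)
    (actV : G -> V -> V) (actW : G -> W -> W) (f : V -> W) : Prop :=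
  (forall (c : rat) (u v : V), f (c *: u + v) = c *: f u + f v) /\
  (forall g v, S g -> f (actV g v) = actW g (f v)).

Definition projective (S : G -> Prop) (M : lmodType rat) (act : G -> M -> M) : Prop :=
  forall (A B : lmodType rat) (actA : G -> A -> A) (actB : G -> B -> B)
         (p : A -> B) (f : M -> B),
    dmodule S actA -> dmodule S actB -> dmorph S actA actB p ->
    (forall b, exists a, p a = b) -> dmorph S act actB f ->
    exists h : M -> A, dmorph S act actA h /\ forall m, p (h m) = f m.

Inductive gen (S : G -> Prop) (V : lmodType rat) (act : G -> V -> V) (l : list V) : V -> Prop :=
| gen_base x : List.In x l -> gen S act l x
| gen_zero : gen S act l 0
| gen_add u v : gen S act l u -> gen S act l v -> gen S act l (u + v)
| gen_scale (c : rat) u : gen S act l u -> gen S act l (c *: u)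
| gen_act g u : S g -> gen S act l u -> gen S act l (act g u).

Definition fin_gen (S : G -> Prop) (V : lmodType rat) (act : G -> V -> V) : Prop :=
  exists l : list V, forall v, gen S act l v.

Definition submodule (S : G -> Prop) (V : lmodType rat) (act : G -> V -> V) (N : V -> Prop) : Prop :=
  N 0 /\ (forall u v, N u -> N v -> N (u + v)) /\ (forall (c : rat) u, N u -> N (c *: u)) /\
  (forall g u, S g -> N u -> N (act g u)).

Definition fin_gen_sub (S : G -> Prop) (V : lmodType rat) (act : G -> V -> V) (N : V -> Prop) : Prop :=
  exists l : list V, (forall x, List.In x l -> N x) /\ (forall v, N v -> gen S act l v).

Definition direct_summand (S : G -> Prop) (V : lmodType rat) (act : G -> V -> V) (N : V -> Prop) : Prop :=
  submodule S act N /\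
  exists N' : V -> Prop, submodule S act N' /\
    (forall m, exists n n', N n /\ N' n' /\ m = n + n') /\
    (forall m, N m -> N' m -> m = 0).

Definition int2Z (z : int) : Z :=
  match z with Posz n => Z.of_nat n | Negz n => Z.opp (Z.of_nat n.+1) end.

Definition rat2R (q : rat) : R := Rdiv (IZR (int2Z (numq q))) (IZR (int2Z (denq q))).

(* An element x = sum_{w in s} c w . w of Q[Omega] is given by a duplicate
   free list s of points of Omega and coefficients c. *)
Definition lin_ext (Om : Type) (V : lmodType rat) (phi : Om -> V) (s : list Om) (c : Om -> rat) : V :=
  \sum_(w <- s) c w *: phi w.

Definition l1norm (Om : Type) (s : list Om) (c : Om -> rat) : R :=
  List.fold_right (fun w acc => Rplus (Rabs (rat2R (c w))) acc) R0 s.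

(* A surjection  Q[Omega] ->> T  (T a submodule of V) from a finitely
   generated proper permutation Q[S]-module, determined by the equivariant
   image phi of the basis Omega. *)
Record filling (S : G -> Prop) (V : lmodType rat) (act : G -> V -> V) (T : V -> Prop) := {
  fl_set : Type;
  fl_act : G -> fl_set -> fl_set;
  fl_phi : fl_set -> V;
  fl_action : is_action S fl_act;
  fl_proper : forall w, compact (fun g => S g /\ fl_act g w = w) /\
                        open_in S (fun g => S g /\ fl_act g w = w);
  (* finitely generated: finitely many S-orbits *)
  fl_fin : exists l : list fl_set, forall w, exists w0 g,
              List.In w0 l /\ S g /\ w = fl_act g w0;
  (* the linear extension of phi is a Q[S]-module map *)
  fl_equiv : forall g w, S g -> fl_phi (fl_act g w) = act g (fl_phi w);
  fl_onto : forall v, T v <-> exists (s : list fl_set) (c : fl_set -> rat),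
              List.NoDup s /\ v = lin_ext fl_phi s c
}.

Definition Rinf (P : R -> Prop) : R :=
  epsilon (inhabits R0) (fun r => (forall x, P x -> Rle r x) /\
                                  (forall b, (forall x, P x -> Rle b x) -> Rle b r)).

Definition fnorm (S : G -> Prop) (V : lmodType rat) (act : G -> V -> V) (T : V -> Prop)
    (F : filling S act T) (v : V) : R :=
  Rinf (fun r => exists (s : list (fl_set F)) (c : fl_set F -> rat),
          List.NoDup s /\ v = lin_ext (@fl_phi S V act T F) s c /\ r = l1norm s c).

End Topology.

Definition norm_equiv (V : Type) (n1 n2 : V -> R) (T : V -> Prop) : Prop :=
  exists C : R, Rlt R0 C /\ forall v, T v -> Rle (n1 v) (Rmult C (n2 v)) /\ Rle (n2 v) (Rmult C (n1 v)).

From Stdlib Require Import Reals ClassicalEpsilon Lra Psatz.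
From Stdlib Require List.
From HB Require Import structures.
From mathcomp Require Import all_boot all_order all_algebra.
From mathcomp Require Import Rstruct boolp.
Import Order.TTheory GRing.Theory Num.Theory.
Local Open Scope ring_scope.
Set Implicit Arguments.
Unset Strict Implicit.

(* Write Om_M, Om_N for the bases of the proper permutation modules defining
   the filling norms of M (over G) and of N (over H), and Q[X] for the
   finitely supported rational functions on X, with linear extension [lin]
   and l1-norm [l1].  Both inequalities follow from one observation: if every
   basis vector w of a filling admits a preimage of l1-norm <= K under another
   filling map, then so does every combination x, with bound K * l1 x
   ([lin_lift]); such a uniform K exists as soon as the bound is stable under
   translation and finitely many orbit representatives suffice ([orbit_bound]).
   - ||n||_M <= C ||n||_N: the basis vectors of Om_N form finitely many
     H-orbits, and the translates of a fixed M-preimage are M-preimages.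
   - ||n||_N <= C ||n||_M: Q[Om_M] is a discrete Q[G]-module mapping onto M,
     so projectivity of M gives an equivariant section s; composing with an
     H-equivariant projection pi : M -> N, n = pi (lin (s n)).  Since N is
     finitely generated over H, s n is supported in finitely many H-orbits
     of Om_M, on which the vectors pi w have uniformly bounded N-preimages. *)

(* Finitely supported rational functions on a type, i.e. the rational vector
   space Q[T] with basis T (equality on T is decided classically). *)

Definition ET (T : Type) : Type := T.
HB.instance Definition _ (T : Type) := gen_eqMixin (ET T).
HB.instance Definition _ (T : Type) := gen_choiceMixin (ET T).

Definition fsupp (T : Type) (f : ET T -> rat) : Prop :=
  exists l : seq (ET T), forall w, f w != 0 -> w \in l.

Definition FS (T : Type) : Type := {f : ET T -> rat | fsupp f}.
HB.instance Definition _ (T : Type) := gen_eqMixin (FS T).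
HB.instance Definition _ (T : Type) := gen_choiceMixin (FS T).

Section FinSupp.
Variable T : Type.
Implicit Types f g h : FS T.

Lemma fsext f g : (forall w, sval f w = sval g w) -> f = g.
Proof.
case: f g => [f fP] [g gP] /= H.
have E : f = g by apply: functional_extensionality_dep.
subst g; by rewrite (Prop_irrelevance fP gP).
Qed.

Lemma fsupp0 : fsupp (fun _ : ET T => 0 : rat).
Proof. by exists [::] => w; rewrite eqxx. Qed.
Definition fs0 : FS T := exist _ _ fsupp0.

Lemma fsuppD f g : fsupp (fun w => sval f w + sval g w).
Proof.
case: f g => [f [l1 H1]] [g [l2 H2]] /=; exists (l1 ++ l2) => w.
rewrite mem_cat; case: (eqVneq (f w) 0) => [->|/H1 ->//].
by rewrite add0r => /H2 ->; rewrite orbT.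
Qed.
Definition fsadd f g : FS T := exist _ _ (fsuppD f g).

Lemma fsuppZ (c : rat) f : fsupp (fun w => c * sval f w).
Proof.
case: f => [f [l H]] /=; exists l => w.
by case: (eqVneq (f w) 0) => [->|/H //]; rewrite mulr0 eqxx.
Qed.
Definition fsscale c f : FS T := exist _ _ (fsuppZ c f).
Definition fsopp f : FS T := fsscale (-1) f.

Lemma fsaddA : associative fsadd.
Proof. by move=> f g h; apply: fsext => w /=; rewrite addrA. Qed.
Lemma fsaddC : commutative fsadd.
Proof. by move=> f g; apply: fsext => w /=; rewrite addrC. Qed.
Lemma fsadd0 : left_id fs0 fsadd.
Proof. by move=> f; apply: fsext => w /=; rewrite add0r. Qed.
Lemma fsaddN : left_inverse fs0 fsopp fsadd.
Proof. by move=> f; apply: fsext => w /=; rewrite mulN1r addNr. Qed.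

HB.instance Definition _ := GRing.isZmodule.Build (FS T) fsaddA fsaddC fsadd0 fsaddN.

Lemma fsscaleA a b f : fsscale a (fsscale b f) = fsscale (a * b) f.
Proof. by apply: fsext => w /=; rewrite mulrA. Qed.
Lemma fsscale1 : left_id 1 fsscale.
Proof. by move=> f; apply: fsext => w /=; rewrite mul1r. Qed.
Lemma fsscaleDr : right_distributive fsscale +%R.
Proof. by move=> a f g; apply: fsext => w /=; rewrite mulrDr. Qed.
Lemma fsscaleDl f : {morph fsscale^~ f : a b / a + b}.
Proof. by move=> a b; apply: fsext => w /=; rewrite mulrDl. Qed.

HB.instance Definition _ := GRing.Zmodule_isLmodule.Build rat (FS T)
  fsscaleA fsscale1 fsscaleDr fsscaleDl.

Lemma fsvalD f g w : sval (f + g) w = sval f w + sval g w. Proof. by []. Qed.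
Lemma fsvalZ c f w : sval (c *: f) w = c * sval f w. Proof. by []. Qed.

Definition supp f : seq (ET T) :=
  undup [seq w <- sval (cid (svalP f)) | sval f w != 0].

Lemma mem_supp f w : (w \in supp f) = (sval f w != 0).
Proof.
rewrite /supp mem_undup mem_filter; case: cid => l Hl /=.
by case: (eqVneq (sval f w) 0) => //= /Hl.
Qed.

Lemma uniq_supp f : uniq (supp f).
Proof. exact: undup_uniq. Qed.

Lemma sum_supp_any (W : nmodType) f (F : ET T -> W) (l : seq (ET T)) :
  uniq l -> (forall w, sval f w != 0 -> w \in l) ->
  (forall w, sval f w = 0 -> F w = 0) ->
  \sum_(w <- supp f) F w = \sum_(w <- l) F w.
Proof.
move=> ul Hl HF.
have -> : \sum_(w <- l) F w = \sum_(w <- l | sval f w != 0) F w.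
  rewrite [RHS]big_mkcond; apply: eq_bigr => w _.
  by case: (eqVneq (sval f w) 0) => [/HF ->|].
rewrite -[RHS]big_filter; apply: perm_big; apply: uniq_perm.
- exact: uniq_supp.
- exact: filter_uniq.
- move=> w; rewrite mem_supp mem_filter.
  by case: (eqVneq (sval f w) 0) => //= /Hl ->.
Qed.

Definition lin (V : lmodType rat) (phi : ET T -> V) f : V :=
  \sum_(w <- supp f) sval f w *: phi w.

Definition l1 f : rat := \sum_(w <- supp f) `|sval f w|.

Lemma lin_any (V : lmodType rat) (phi : ET T -> V) f l :
  uniq l -> (forall w, sval f w != 0 -> w \in l) ->
  lin phi f = \sum_(w <- l) sval f w *: phi w.
Proof. by move=> ul Hl; apply: sum_supp_any => // w ->; rewrite scale0r. Qed.

Lemma l1_any f l :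
  uniq l -> (forall w, sval f w != 0 -> w \in l) ->
  l1 f = \sum_(w <- l) `|sval f w|.
Proof. by move=> ul Hl; apply: sum_supp_any => // w ->; rewrite normr0. Qed.

Lemma supp_cover f g :
  [/\ uniq (undup (supp f ++ supp g)),
      forall w, sval f w != 0 -> w \in undup (supp f ++ supp g),
      forall w, sval g w != 0 -> w \in undup (supp f ++ supp g) &
      forall c w, sval (c *: f + g) w != 0 -> w \in undup (supp f ++ supp g)].
Proof.
have Hf w : sval f w != 0 -> w \in undup (supp f ++ supp g).
  by rewrite mem_undup mem_cat mem_supp => ->.
have Hg w : sval g w != 0 -> w \in undup (supp f ++ supp g).
  by rewrite mem_undup mem_cat !mem_supp => ->; rewrite orbT.
split=> // [|c w]; first exact: undup_uniq.
rewrite fsvalD fsvalZ; case: (eqVneq (sval f w) 0) => [E|/Hf //].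
by rewrite E mulr0 add0r => /Hg.
Qed.

Lemma linP (V : lmodType rat) (phi : ET T -> V) (c : rat) f g :
  lin phi (c *: f + g) = c *: lin phi f + lin phi g.
Proof.
have [ul Hf Hg Hfg] := supp_cover f g.
rewrite (lin_any _ ul Hf) (lin_any _ ul Hg) (lin_any _ ul (Hfg c)).
rewrite scaler_sumr -big_split /=; apply: eq_bigr => w _.
by rewrite scalerDl scalerA.
Qed.

Lemma l1_ge0 f : 0 <= l1 f.
Proof. by apply: sumr_ge0 => w _; rewrite normr_ge0. Qed.

Lemma l1P (c : rat) f g : l1 (c *: f + g) <= `|c| * l1 f + l1 g.
Proof.
have [ul Hf Hg Hfg] := supp_cover f g.
rewrite (l1_any ul Hf) (l1_any ul Hg) (l1_any ul (Hfg c)).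
rewrite mulr_sumr -big_split /=; apply: ler_sum => w _.
by rewrite -normrM ler_normD.
Qed.

Lemma l10 : l1 0 = 0.
Proof. by rewrite /l1 (@sum_supp_any _ _ _ [::]) ?big_nil // => w; rewrite eqxx. Qed.

Lemma fsupp_list (s : seq (ET T)) (c : ET T -> rat) :
  fsupp (fun w => if w \in s then c w else 0).
Proof. by exists s => w; case: (w \in s). Qed.
Definition of_list s c : FS T := exist _ _ (fsupp_list s c).

Lemma lin_of_list (V : lmodType rat) (phi : ET T -> V) s c :
  uniq s -> lin phi (of_list s c) = \sum_(w <- s) c w *: phi w.
Proof.
move=> us; rewrite (lin_any _ us); last by move=> w /=; case: (w \in s).
by apply: eq_big_seq => w /= ->.
Qed.

Lemma l1_of_list s c : uniq s -> l1 (of_list s c) = \sum_(w <- s) `|c w|.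
Proof.
move=> us; rewrite (l1_any us); last by move=> w /=; case: (w \in s).
by apply: eq_big_seq => w /= ->.
Qed.

Lemma l1_sum (I : Type) (l : seq I) (a : I -> rat) (z : I -> FS T) :
  l1 (\sum_(i <- l) a i *: z i) <= \sum_(i <- l) `|a i| * l1 (z i).
Proof.
elim: l => [|i l IH]; first by rewrite !big_nil l10.
by rewrite !big_cons; apply: le_trans (l1P _ _ _) _; exact: lerD.
Qed.

Section Transport.
Variables (u v : ET T -> ET T).
Hypotheses (uv : forall w, u (v w) = w) (vu : forall w, v (u w) = w).

Lemma fsupp_perm f : fsupp (fun w => sval f (v w)).
Proof.
exists (map u (supp f)) => w H; rewrite -[w]uv; apply: map_f.
by rewrite mem_supp.
Qed.
Definition fsperm f : FS T := exist _ _ (fsupp_perm f).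

Lemma uniq_map_u f : uniq (map u (supp f)).
Proof.
rewrite map_inj_uniq ?uniq_supp // => x y E.
by rewrite -(vu x) E vu.
Qed.

Lemma mem_map_u f w : sval (fsperm f) w != 0 -> w \in map u (supp f).
Proof. by move=> H; rewrite -[w]uv; apply: map_f; rewrite mem_supp. Qed.

Lemma l1_perm f : l1 (fsperm f) = l1 f.
Proof.
rewrite (l1_any (uniq_map_u f) (@mem_map_u f)) big_map.
by apply: eq_bigr => w _ /=; rewrite vu.
Qed.

Lemma lin_perm (V : lmodType rat) (phi : ET T -> V) f :
  lin phi (fsperm f) = \sum_(w <- supp f) sval f w *: phi (u w).
Proof.
rewrite (lin_any _ (uniq_map_u f) (@mem_map_u f)) big_map.
by apply: eq_bigr => w _ /=; rewrite vu.
Qed.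
End Transport.
End FinSupp.

Section LinearMaps.
Variables (V W : lmodType rat) (f : V -> W).
Hypothesis fL : forall (c : rat) u v, f (c *: u + v) = c *: f u + f v.

Lemma lin_f0 : f 0 = 0.
Proof. by have := fL (-1) 0 0; rewrite scaler0 add0r scaleN1r addNr. Qed.
Lemma lin_fD u v : f (u + v) = f u + f v.
Proof. by have := fL 1 u v; rewrite !scale1r. Qed.
Lemma lin_fZ (c : rat) u : f (c *: u) = c *: f u.
Proof. by have := fL c u 0; rewrite !addr0 lin_f0 addr0. Qed.
Lemma lin_fsum (I : Type) (l : seq I) (a : I -> rat) (F : I -> V) :
  f (\sum_(i <- l) a i *: F i) = \sum_(i <- l) a i *: f (F i).
Proof.
elim: l => [|i l IH]; first by rewrite !big_nil lin_f0.
by rewrite !big_cons fL IH.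
Qed.
End LinearMaps.

Lemma l1_combination (T T' : Type) (x : FS T) (z : ET T -> FS T') (K : rat) :
  (forall w, sval x w != 0 -> l1 (z w) <= K) ->
  l1 (\sum_(w <- supp x) sval x w *: z w) <= K * l1 x.
Proof.
move=> Hz; apply: le_trans (l1_sum _ _ _) _.
rewrite /l1 mulr_sumr big_seq [leRHS]big_seq; apply: ler_sum => w.
rewrite mem_supp => Hw; rewrite mulrC.
by apply: ler_wpM2r; [exact: normr_ge0 | exact: Hz].
Qed.

Lemma lin_lift (T1 T2 : Type) (V : lmodType rat) (phi1 : ET T1 -> V)
    (phi2 : ET T2 -> V) (K : rat) (x : FS T2) :
  (forall w, sval x w != 0 -> exists z, lin phi1 z = phi2 w /\ l1 z <= K) ->
  exists z, lin phi1 z = lin phi2 x /\ l1 z <= K * l1 x.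
Proof.
move=> Hw.
have pick w : exists z, sval x w != 0 -> lin phi1 z = phi2 w /\ l1 z <= K.
  case: (eqVneq (sval x w) 0) => [_|/Hw [z Hz]]; last by exists z.
  by exists 0.
pose zw w := sval (cid (pick w)).
have zwP w : sval x w != 0 -> lin phi1 (zw w) = phi2 w /\ l1 (zw w) <= K.
  by rewrite /zw; case: cid.
exists (\sum_(w <- supp x) sval x w *: zw w); split.
  rewrite (lin_fsum (linP phi1)) [RHS]/lin; apply: eq_big_seq => w.
  by rewrite mem_supp => /zwP [->].
by apply: l1_combination => w /zwP [].
Qed.

Lemma IZR_int2Z z : IZR (int2Z z) = (z%:~R : R).
Proof.
case: z => n; first by rewrite /int2Z -INR_IZR_INZ INRE.
change (IZR (Z.opp (Z.of_nat n.+1)) = (Negz n)%:~R).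
by rewrite opp_IZR -INR_IZR_INZ INRE NegzE mulrNz.
Qed.

Lemma rat2RE q : rat2R q = ratr q.
Proof. by rewrite /rat2R RdivE !IZR_int2Z. Qed.

Lemma rat2R_le a b : a <= b -> Rle (rat2R a) (rat2R b).
Proof. by rewrite !rat2RE -(ler_rat R) => /RleP. Qed.

Lemma rat2R_gt0 a : 0 < a -> Rlt R0 (rat2R a).
Proof. by rewrite rat2RE -(ltr_rat R) rmorph0 => /RltP. Qed.

Lemma rat2R_ge0 a : 0 <= a -> Rle R0 (rat2R a).
Proof. by move=> /rat2R_le; rewrite rat2RE rmorph0. Qed.

Lemma rat2R_mul a b : rat2R (a * b) = Rmult (rat2R a) (rat2R b).
Proof. by rewrite !rat2RE rmorphM. Qed.

Lemma l1norm_rat (T : Type) (s : seq T) (c : T -> rat) :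
  l1norm s c = rat2R (\sum_(w <- s) `|c w|).
Proof.
elim: s => [|x s IH] /=; first by rewrite big_nil rat2RE rmorph0.
by rewrite big_cons IH !rat2RE rmorphD /= ratr_norm RabsE RplusE.
Qed.

Lemma In_mem (T : eqType) (x : T) s : List.In x s <-> x \in s.
Proof.
elim: s => [|y s IH] //=; rewrite in_cons; split.
  by case=> [->|/IH ->]; rewrite ?eqxx ?orbT.
by case/orP => [/eqP ->|/IH]; [left|right].
Qed.

Lemma NoDup_uniq (T : eqType) (s : seq T) : List.NoDup s <-> uniq s.
Proof.
elim: s => [|x s IH] /=; first by split=> // _; constructor.
split.
  move=> H; inversion H; subst; apply/andP; split; last by apply/IH.
  by apply/negP => /In_mem.
case/andP => Hx Hs; constructor; last by apply/IH.
by move/In_mem; apply/negP.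
Qed.

Lemma Rinf_spec (P : R -> Prop) :
  (exists x, P x) -> (forall x, P x -> Rle R0 x) ->
  (forall x, P x -> Rle (Rinf P) x) /\
  (forall b, (forall x, P x -> Rle b x) -> Rle b (Rinf P)).
Proof.
move=> [x0 Px0] H0.
have [m [Hub Hlub]] : { m | is_lub (fun y => P (Ropp y)) m }.
  apply: completeness; last by exists (Ropp x0); rewrite Ropp_involutive.
  by exists R0 => y Py; have := H0 _ Py; lra.
apply: (@epsilon_spec R (inhabits R0) (fun r => (forall x, P x -> Rle r x) /\
       (forall b, (forall x, P x -> Rle b x) -> Rle b r))).
exists (Ropp m); split.
  move=> x Px; have : Rle (Ropp x) m by apply: Hub; rewrite Ropp_involutive.
  lra.
move=> b Hb; have : Rle m (Ropp b) by apply: Hlub => y Py; have := Hb _ Py; lra.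
lra.
Qed.

Section FillingNorm.
Variables (G : TopGroup) (S : G -> Prop) (V : lmodType rat) (act : G -> V -> V)
  (T : V -> Prop) (F : filling S act T).
Local Notation phi := (@fl_phi _ _ _ _ _ F : ET (fl_set F) -> V).

Lemma lin_filling_in (z : FS (fl_set F)) : T (lin phi z).
Proof.
apply/(fl_onto F); exists (supp z), (sval z); split=> //.
exact/(@NoDup_uniq (ET (fl_set F)))/uniq_supp.
Qed.

Lemma filling_surj v : T v -> exists z : FS (fl_set F), lin phi z = v.
Proof.
move=> /(fl_onto F) [s [c [/(@NoDup_uniq (ET (fl_set F))) us ->]]].
by exists (of_list s c); rewrite lin_of_list.
Qed.

Lemma fnorm_spec v : T v ->
  (forall z : FS (fl_set F), lin phi z = v -> Rle (fnorm F v) (rat2R (l1 z))) /\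
  (forall b, (forall z : FS (fl_set F), lin phi z = v -> Rle b (rat2R (l1 z))) ->
     Rle b (fnorm F v)).
Proof.
move=> Tv; have [z0 Hz0] := filling_surj Tv.
set P := (fun r => exists (s : list (fl_set F)) (c : fl_set F -> rat),
          List.NoDup s /\ v = lin_ext phi s c /\ r = l1norm s c).
have PE r : P r <-> exists z : FS (fl_set F), lin phi z = v /\ r = rat2R (l1 z).
  rewrite /P; split.
    move=> [s [c [/(@NoDup_uniq (ET (fl_set F))) us [-> ->]]]].
    by exists (of_list s c); rewrite lin_of_list // l1_of_list // l1norm_rat.
  move=> [z [<- ->]]; exists (supp z), (sval z).
  split; first exact/(@NoDup_uniq (ET (fl_set F)))/uniq_supp.
  by rewrite l1norm_rat.
have Hex : exists r, P r by exists (rat2R (l1 z0)); apply/PE; exists z0.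
have Hpos r : P r -> Rle R0 r.
  by move=> /PE [z [_ ->]]; apply/rat2R_ge0/l1_ge0.
have [H1 H2] := Rinf_spec Hex Hpos; split.
  by move=> z Hz; apply: H1; apply/PE; exists z.
by move=> b Hb; apply: H2 => r /PE [z [Hz ->]]; apply: Hb.
Qed.

Lemma fnorm_le_l1 (z : FS (fl_set F)) : Rle (fnorm F (lin phi z)) (rat2R (l1 z)).
Proof. by apply: (proj1 (fnorm_spec (lin_filling_in z))). Qed.

Lemma fnorm_ge v b : T v ->
  (forall z : FS (fl_set F), lin phi z = v -> Rle b (rat2R (l1 z))) ->
  Rle b (fnorm F v).
Proof. by move=> Tv; apply: (proj2 (fnorm_spec Tv)). Qed.

Lemma fnorm_ge0 v : T v -> Rle R0 (fnorm F v).
Proof. by move=> Tv; apply: fnorm_ge => // z _; apply/rat2R_ge0/l1_ge0. Qed.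
End FillingNorm.

Definition dominates (V : Type) (n1 n2 : V -> R) (T : V -> Prop) : Prop :=
  exists C : R, Rlt R0 C /\ forall v, T v -> Rle (n1 v) (Rmult C (n2 v)).

Lemma norm_equiv_of_dominates (V : Type) (n1 n2 : V -> R) (T : V -> Prop) :
  (forall v, T v -> Rle R0 (n1 v)) -> (forall v, T v -> Rle R0 (n2 v)) ->
  dominates n1 n2 T -> dominates n2 n1 T -> norm_equiv n1 n2 T.
Proof.
move=> n1p n2p [C1 [C1p H1]] [C2 [C2p H2]].
exists (Rplus C1 C2); split; first lra.
move=> v Tv; have := H1 v Tv; have := H2 v Tv.
have := n1p v Tv; have := n2p v Tv; split; nra.
Qed.

Lemma fnorm_dominates (G : TopGroup) (S1 S2 : G -> Prop) (V : lmodType rat)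
    (act : G -> V -> V) (T1 T2 T : V -> Prop)
    (F1 : filling S1 act T1) (F2 : filling S2 act T2) (K : rat) :
  0 < K -> (forall v, T v -> T2 v) ->
  (forall v (x : FS (fl_set F2)), T v -> lin (@fl_phi _ _ _ _ _ F2) x = v ->
     exists z : FS (fl_set F1), lin (@fl_phi _ _ _ _ _ F1) z = v /\ l1 z <= K * l1 x) ->
  dominates (fnorm F1) (fnorm F2) T.
Proof.
move=> Kpos T2T Hlift; have KR := rat2R_gt0 Kpos.
exists (rat2R K); split=> // v Tv.
have cancelK : Rmult (rat2R K) (Rdiv (fnorm F1 v) (rat2R K)) = fnorm F1 v.
  by field; lra.
rewrite -cancelK; apply: Rmult_le_compat_l; first lra.
apply: (fnorm_ge (T2T _ Tv)) => x Hx.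
have [z [Hz Hzl]] := Hlift v x Tv Hx.
apply: (Rmult_le_reg_l (rat2R K)) => //; rewrite cancelK -rat2R_mul.
by apply: Rle_trans (rat2R_le Hzl); rewrite -Hz; exact: fnorm_le_l1.
Qed.

Lemma orbit_bound (I X : Type) (S : I -> Prop) (a : I -> X -> X) (L : seq X)
    (Q : rat -> X -> Prop) :
  (forall K K' w, K <= K' -> Q K w -> Q K' w) ->
  (forall K g w, S g -> Q K w -> Q K (a g w)) ->
  (forall w, List.In w L -> exists K, Q K w) ->
  exists K, 0 < K /\ forall g w, S g -> List.In w L -> Q K (a g w).
Proof.
move=> Qmono Qinv QL.
have pick w : exists K, List.In w L -> Q K w.
  by case: (pselect (List.In w L)) => [/QL [K HK]|nL]; [exists K|exists 0].
pose Kw w := sval (cid (pick w)).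
have KwP w : List.In w L -> Q (Kw w) w by rewrite /Kw; case: cid.
exists (\sum_(w <- L) `|Kw w| + 1); split.
  by apply: ltr_wpDl => //; apply: sumr_ge0 => *; exact: normr_ge0.
move=> g w Sg Lw; apply: Qinv => //; apply: Qmono (KwP w Lw).
have term_le (l : seq X) (f : X -> rat) y :
    List.In y l -> `|f y| <= \sum_(z <- l) `|f z|.
  elim: l => [|z l IH] //= [->|/IH Hy]; rewrite big_cons.
    by rewrite lerDl sumr_ge0.
  by apply: le_trans Hy _; rewrite lerDr.
apply: le_trans (ler_norm _) _; apply: le_trans (term_le _ Kw _ Lw) _.
by rewrite lerDl.
Qed.

Section GroupFacts.
Variable G : TopGroup.
Implicit Types g h : G.

Lemma inv_uniq g h : tg_mul g h = tg_one G -> tg_inv g = h.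
Proof.
move=> E; rewrite -(tg_mulg1 (tg_inv g)) -E tg_mulA tg_mulVg; exact: tg_mul1g.
Qed.

Lemma inv_one : tg_inv (tg_one G) = tg_one G.
Proof. by apply: inv_uniq; rewrite tg_mul1g. Qed.

Lemma inv_mul g h : tg_inv (tg_mul g h) = tg_mul (tg_inv h) (tg_inv g).
Proof.
by apply: inv_uniq; rewrite tg_mulA -(tg_mulA g h) tg_mulgV tg_mulg1 tg_mulgV.
Qed.

Lemma act_inv (S : G -> Prop) (X : Type) (a : G -> X -> X) g w :
  is_action S a -> S g -> S (tg_inv g) ->
  a g (a (tg_inv g) w) = w /\ a (tg_inv g) (a g w) = w.
Proof.
move=> [a1 aM] Sg Sg'.
by split; rewrite -aM // (tg_mulgV, tg_mulVg) a1.
Qed.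

(* A multiplicatively closed set containing an open neighbourhood K of 1 is
   open: around each of its points s it contains the open set s . K'. *)
Lemma open_of_mul_closed (P K : G -> Prop) :
  tg_open K -> K (tg_one G) -> (forall g, K g -> P g) ->
  (forall g h, P g -> P h -> P (tg_mul g h)) -> open_in (@wholeG G) P.
Proof.
move=> Ko K1 KP PM.
have Hloc s : P s -> exists W, tg_open W /\ W s /\ forall b, W b -> P b.
  move=> Ps; have Hone : K (tg_mul (tg_inv s) s) by rewrite tg_mulVg.
  have [V [W [_ [Wo [Vs [Ws HVW]]]]]] := tg_mul_cont Ko Hone.
  exists W; split=> //; split=> // b Wb.
  have : P (tg_mul s (tg_mul (tg_inv s) b)) by apply: PM => //; apply/KP/HVW.
  by rewrite tg_mulA tg_mulgV tg_mul1g.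
(* P is the union of all open sets contained in it *)
pose I := {W : G -> Prop | tg_open W /\ forall b, W b -> P b}.
exists (fun b => exists i : I, sval i b); split.
  by apply: tg_open_union => -[W []].
move=> g _; split; last by move=> [[W [_ WP]] /= /WP].
by move=> /Hloc [W [Wo [Wg WP]]]; exists (exist _ W (conj Wo WP)).
Qed.
End GroupFacts.

Section Translation.
Variables (G : TopGroup) (S : G -> Prop) (V : lmodType rat) (act : G -> V -> V)
  (T : V -> Prop) (F : filling S act T) (g : G).
Hypotheses (Sg : S g) (Sg' : S (tg_inv g)).
Local Notation Om := (ET (fl_set F)).
Local Notation a := (@fl_act _ _ _ _ _ F).
Local Notation phi := (@fl_phi _ _ _ _ _ F : Om -> V).

Lemma fl_act_uv (w : Om) : a g (a (tg_inv g) w) = w.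
Proof. by have [] := act_inv w (fl_action F) Sg Sg'. Qed.
Lemma fl_act_vu (w : Om) : a (tg_inv g) (a g w) = w.
Proof. by have [] := act_inv w (fl_action F) Sg Sg'. Qed.

Definition ftrans : FS (fl_set F) -> FS (fl_set F) := fsperm fl_act_uv.

Lemma ftrans_val f w : sval (ftrans f) w = sval f (a (tg_inv g) w).
Proof. by []. Qed.

Lemma l1_ftrans f : l1 (ftrans f) = l1 f.
Proof. exact: l1_perm fl_act_vu f. Qed.

Lemma lin_ftrans f :
  (forall (c : rat) u v, act g (c *: u + v) = c *: act g u + act g v) ->
  lin phi (ftrans f) = act g (lin phi f).
Proof.
move=> actL; rewrite (lin_perm _ fl_act_vu) /lin (lin_fsum actL).
by apply: eq_bigr => w _; rewrite (@fl_equiv _ _ _ _ _ F g w Sg).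
Qed.
End Translation.

Lemma dmodule_linear (G : TopGroup) (S : G -> Prop) (V : lmodType rat)
    (act : G -> V -> V) g :
  dmodule S act -> S g ->
  forall (c : rat) u v, act g (c *: u + v) = c *: act g u + act g v.
Proof. by move=> [_ [actL _]] Sg; apply: actL. Qed.

(* The permutation module Q[Om] of a filling of M (over all of G) is itself
   a discrete Q[G]-module mapping onto M; hence, M being projective, the
   filling map has a G-equivariant linear section. *)
Section PermutationModule.
Variables (G : TopGroup) (M : lmodType rat) (act : G -> M -> M)
  (Mdisc : dmodule (@wholeG G) act)
  (FM : filling (@wholeG G) act (fun _ => True)).
Local Notation Om := (ET (fl_set FM)).
Local Notation a := (@fl_act _ _ _ _ _ FM).
Local Notation phi := (@fl_phi _ _ _ _ _ FM : Om -> M).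

Definition gactM (g : G) : FS (fl_set FM) -> FS (fl_set FM) :=
  @ftrans _ _ _ _ _ FM g I I.

Lemma gactM_one f : gactM (tg_one G) f = f.
Proof. by apply: fsext => w; rewrite ftrans_val inv_one (proj1 (fl_action FM)). Qed.

Lemma gactM_mul g h f : gactM (tg_mul g h) f = gactM g (gactM h f).
Proof. by apply: fsext => w; rewrite !ftrans_val inv_mul (proj2 (fl_action FM)). Qed.

Lemma stab_list_open (l : seq Om) : exists W, tg_open W /\
  forall g, (forall w, List.In w l -> a g w = w) <-> W g.
Proof.
elim: l => [|w l [Wl [Wlo HWl]]].
  by exists (fun _ => True); split; [exact: tg_open_full|].
have [_ [Ww [Wwo HWw]]] := @fl_proper _ _ _ _ _ FM w.
exists (fun x => Ww x /\ Wl x); split; first exact: tg_open_inter.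
move=> g; split.
  move=> Hg; split; first by apply/(HWw g I); split=> //; apply: Hg; left.
  by apply/HWl => w' Hw'; apply: Hg; right.
by move=> [/(HWw g I) [_ Hw] /HWl Hl] w' [<-|] //; exact: Hl.
Qed.

(* stabilisers in Q[Om] are open: they contain the stabiliser of the support *)
Lemma gactM_stab_open f : open_in (@wholeG G) (fun g => gactM g f = f).
Proof.
have [K [Ko HK]] := stab_list_open (supp f).
apply: (open_of_mul_closed Ko) => [|g /HK Kg|g h Hg Hh].
- by apply/HK => w _; exact: (proj1 (fl_action FM)).
- apply: fsext => w; rewrite ftrans_val.
  case: (eqVneq (sval f w) 0) => Hw.
    case: (eqVneq (sval f (a (tg_inv g) w)) 0) => [->|H'] //.
    have := Kg _ (proj2 (In_mem _ _) (etrans (mem_supp _ _) H')).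
    by rewrite (@fl_act_uv _ _ _ _ _ FM g I I) => E; move: H'; rewrite -E Hw eqxx.
  have := Kg _ (proj2 (In_mem _ _) (etrans (mem_supp _ _) Hw)).
  by move=> {1}<-; rewrite (@fl_act_vu _ _ _ _ _ FM g I I).
- by rewrite gactM_mul Hh Hg.
Qed.

Lemma gactM_dmodule : dmodule (@wholeG G) gactM.
Proof.
split; first by split; [exact: gactM_one | move=> g h x _ _; exact: gactM_mul].
split; last exact: gactM_stab_open.
by move=> g _ c u v; apply: fsext.
Qed.

Lemma lin_dmorph : dmorph (@wholeG G) gactM act (lin phi).
Proof.
split; first exact: linP.
by move=> g v _; apply: lin_ftrans; exact: dmodule_linear Mdisc _.
Qed.

Lemma equivariant_section : projective (@wholeG G) act ->
  exists s : M -> FS (fl_set FM),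
    (forall (c : rat) u v, s (c *: u + v) = c *: s u + s v) /\
    (forall g m, s (act g m) = gactM g (s m)) /\
    (forall m, lin phi (s m) = m).
Proof.
move=> Mproj.
have idM : dmorph (@wholeG G) act act (fun m : M => m) by [].
have surj m : exists z, lin phi z = m by exact: (filling_surj FM (v := m) I).
have [s [[sL sE] sS]] := Mproj _ _ _ _ _ _ gactM_dmodule Mdisc lin_dmorph surj idM.
by exists s; split; [|split] => // g m; apply: sE.
Qed.
End PermutationModule.

Section Projection.
Variables (G : TopGroup) (S : G -> Prop) (M : lmodType rat) (act : G -> M -> M)
  (Mdisc : dmodule (@wholeG G) act) (N : M -> Prop) (Nsum : direct_summand S act N).

Lemma submoduleB (P : M -> Prop) :
  submodule S act P -> forall u v, P u -> P v -> P (u - v).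
Proof. by move=> [_ [PD [PZ _]]] u v Pu Pv; rewrite -scaleN1r; exact: PD (PZ _ _ Pv). Qed.

Lemma submodule_lin (P : M -> Prop) :
  submodule S act P -> forall (c : rat) u v, P u -> P v -> P (c *: u + v).
Proof. by move=> [_ [PD [PZ _]]] c u v Pu Pv; exact: PD (PZ _ _ Pu) Pv. Qed.

Lemma projection_onto_summand : exists pi : M -> M,
  (forall (c : rat) u v, pi (c *: u + v) = c *: pi u + pi v) /\
  (forall h m, S h -> pi (act h m) = act h (pi m)) /\
  (forall m, N (pi m)) /\ (forall m, N m -> pi m = m).
Proof.
have [NS [N' [N'S [Hdec Hint]]]] := Nsum.
(* the N-component of m is the unique n in N with m - n in N' *)
have uniq_dec m n1 n2 : N n1 -> N' (m - n1) -> N n2 -> N' (m - n2) -> n1 = n2.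
  move=> Nn1 Nn1' Nn2 Nn2'; apply/eqP; rewrite -subr_eq0; apply/eqP.
  apply: Hint; first exact: submoduleB.
  have -> : n1 - n2 = (m - n2) - (m - n1) by rewrite opprB [RHS]addrC addrA subrK.
  exact: submoduleB.
have dec m : exists n, N n /\ N' (m - n).
  have [n [n' [Nn [Nn' ->]]]] := Hdec m; exists n; split=> //.
  by rewrite addrAC subrr add0r.
pose pi m := sval (cid (dec m)).
have piN m : N (pi m) by rewrite /pi; case: cid => ? [].
have piN' m : N' (m - pi m) by rewrite /pi; case: cid => ? [].
have [_ [_ [_ NA]]] := NS; have [_ [_ [_ N'A]]] := N'S.
exists pi; split; [|split; [|split]] => //.
- move=> c u v; symmetry; apply: (uniq_dec (c *: u + v)).
  + exact: submodule_lin.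
  + have -> : c *: u + v - (c *: pi u + pi v) = c *: (u - pi u) + (v - pi v).
      by rewrite scalerBr opprD addrACA.
    exact: submodule_lin.
  + exact: piN.
  + exact: piN'.
- move=> h m Sh; have actL := dmodule_linear Mdisc (I : wholeG h).
  apply: (uniq_dec (act h m)); [exact: piN|exact: piN'|by apply: NA|].
  by rewrite -scaleN1r -(lin_fZ actL) -(lin_fD actL) scaleN1r; apply: N'A Sh (piN' m).
- move=> m Nm; apply: (uniq_dec m _ _ (piN m) (piN' m) Nm).
  by rewrite subrr; case: N'S.
Qed.
End Projection.

Section Comparison.
Variables (G : TopGroup) (H : G -> Prop) (HH : closed_subgroup H)
  (M : lmodType rat) (act : G -> M -> M) (Mdisc : dmodule (@wholeG G) act)
  (FM : filling (@wholeG G) act (fun _ => True))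
  (N : M -> Prop) (FN : filling H act N).
Local Notation OM := (ET (fl_set FM)).
Local Notation aM := (@fl_act _ _ _ _ _ FM).
Local Notation pM := (@fl_phi _ _ _ _ _ FM : OM -> M).
Local Notation ON := (ET (fl_set FN)).
Local Notation aN := (@fl_act _ _ _ _ _ FN).
Local Notation pN := (@fl_phi _ _ _ _ _ FN : ON -> M).

Let actL g := dmodule_linear Mdisc (I : wholeG g).

(* ||n||_M <= C ||n||_N: the basis vectors of Om_N lie in finitely many
   H-orbits, and G-translates of M-preimages are M-preimages. *)
Lemma fnorm_M_dominated : dominates (fnorm FM) (fnorm FN) N.
Proof.
have [LN HLN] := fl_fin FN.
pose Q K (w : ON) := exists z : FS (fl_set FM), lin pM z = pN w /\ l1 z <= K.
have [K [Kpos HK]] :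
    exists K, 0 < K /\ forall g w, H g -> List.In w LN -> Q K (aN g w).
  apply: orbit_bound.
  - by move=> K1 K2 w le [z [Hz Hzl]]; exists z; split=> //; exact: le_trans Hzl le.
  - move=> K1 g w Hg [z [Hz Hzl]]; exists (gactM (FM := FM) g z).
    rewrite l1_ftrans (lin_ftrans _ _ _ (actL g)) Hz.
    by rewrite (@fl_equiv _ _ _ _ _ FN g w Hg).
  - move=> w _; have [z Hz] := filling_surj FM (v := pN w) I.
    by exists (l1 z), z.
have Qall w : Q K w by have [w0 [g [Lw0 [Hg ->]]]] := HLN w; exact: HK.
apply: (fnorm_dominates (K := K)) => // v x Nv <-.
by apply: lin_lift => w _; exact: Qall.
Qed.

Variables (s : M -> FS (fl_set FM)) (pi : M -> M) (L : seq M).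
Hypotheses (sL : forall (c : rat) u v, s (c *: u + v) = c *: s u + s v)
  (sE : forall g m, s (act g m) = gactM (FM := FM) g (s m))
  (sS : forall m, lin pM (s m) = m)
  (piL : forall (c : rat) u v, pi (c *: u + v) = c *: pi u + pi v)
  (piE : forall h m, H h -> pi (act h m) = act h (pi m))
  (piN : forall m, N (pi m)) (piId : forall m, N m -> pi m = m)
  (HL : forall v, N v -> gen H act L v).

(* s is bounded for the l1-norms: each s (pM w) is a G-translate of one of
   finitely many vectors. *)
Lemma section_l1_bound : exists K, 0 < K /\
  forall x : FS (fl_set FM), l1 (s (lin pM x)) <= K * l1 x.
Proof.
have [LM HLM] := fl_fin FM.
have [K [Kpos HK]] : exists K, 0 < K /\
    forall g w, wholeG g -> List.In w LM -> l1 (s (pM (aM g w))) <= K.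
  apply: (orbit_bound (S := @wholeG G) (a := aM) (Q := fun K w => l1 (s (pM w)) <= K)).
  - by move=> K1 K2 w le Hw; exact: le_trans Hw le.
  - move=> K g w _; rewrite (@fl_equiv _ _ _ _ _ FM g w I) sE.
    by rewrite l1_ftrans.
  - by move=> w _; exists (l1 (s (pM w))).
exists K; split=> // x; rewrite /lin (lin_fsum sL).
by apply: l1_combination => w _; have [w0 [g [Lw0 [_ ->]]]] := HLM w; exact: HK.
Qed.

Definition section_reps : seq OM := List.flat_map (fun m => supp (s m)) L.

Lemma section_support v : N v -> forall w, sval (s v) w != 0 ->
  exists h w0, H h /\ List.In w0 section_reps /\ w = aM h w0.
Proof.
have [H1 [Hmul _]] := HH.
move=> /HL; elim => {v} [m Lm|| u v _ IHu _ IHv|c u _ IHu|g u Hg _ IHu] w Hw.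
- exists (tg_one G), w; split; first exact: H1.
  split; last by rewrite (proj1 (fl_action FM)).
  apply/List.in_flat_map; exists m; split=> //.
  by apply/In_mem; rewrite mem_supp.
- by move: Hw; rewrite (lin_f0 sL) eqxx.
- move: Hw; rewrite (lin_fD sL) fsvalD.
  by case: (eqVneq (sval (s u) w) 0) => [->|/IHu //]; rewrite add0r; exact: IHv.
- move: Hw; rewrite (lin_fZ sL) fsvalZ.
  by case: (eqVneq (sval (s u) w) 0) => [->|/IHu //]; rewrite mulr0 eqxx.
- move: Hw; rewrite sE ftrans_val => /IHu [h [w0 [Hh [Lw0 E]]]].
  exists (tg_mul g h), w0; split; first exact: Hmul.
  split=> //; rewrite (proj2 (fl_action FM)) // -E.
  by rewrite (@fl_act_uv _ _ _ _ _ FM g I I).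
Qed.

(* ||n||_N <= C ||n||_M: for a preimage x of n, n = pi (lin pM (s n)) is a
   combination of the vectors pi w, w in the support of s n, which lie in
   finitely many H-orbits and so have uniformly bounded N-preimages. *)
Lemma fnorm_N_dominated : dominates (fnorm FN) (fnorm FM) N.
Proof.
have Hinv : forall h, H h -> H (tg_inv h) by case: HH => _ [_ []].
have [Ks [Kspos s_bound]] := section_l1_bound.
pose Q K (w : OM) := exists z : FS (fl_set FN), lin pN z = pi (pM w) /\ l1 z <= K.
have [K [Kpos HK]] : exists K, 0 < K /\
    forall h w, H h -> List.In w section_reps -> Q K (aM h w).
  apply: orbit_bound.
  - by move=> K1 K2 w le [z [Hz Hzl]]; exists z; split=> //; exact: le_trans Hzl le.
  - move=> K1 h w Hh [z [Hz Hzl]]; exists (@ftrans _ _ _ _ _ FN h Hh (Hinv h Hh) z).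
    rewrite l1_ftrans (lin_ftrans _ _ _ (actL h)) Hz -piE //.
    by rewrite (@fl_equiv _ _ _ _ _ FM h w I).
  - move=> w _; have [z Hz] := filling_surj FN (piN (pM w)).
    by exists (l1 z), z.
apply: (fnorm_dominates (K := K * Ks)) => [|//|v x Nv Hx]; first exact: mulr_gt0.
have Ev : lin (fun w => pi (pM w)) (s v) = v.
  by rewrite /lin -(lin_fsum piL) -/(lin pM (s v)) sS piId.
have lift_support w : sval (s v) w != 0 -> Q K w.
  by move=> /(section_support Nv) [h [w0 [Hh [Lw0 ->]]]]; exact: HK.
have [z [Hz Hzl]] := @lin_lift _ _ _ pN (fun w => pi (pM w)) K (s v) lift_support.
exists z; split; first by rewrite Hz Ev.
apply: le_trans Hzl _; rewrite -mulrA; apply: ler_wpM2l; first exact: ltW.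
by rewrite -Hx; exact: s_bound.
Qed.
End Comparison.

Theorem proposition4p5 (G : TopGroup) (HG : TDLC G)
  (H : G -> Prop) (HH : closed_subgroup H)
  (M : lmodType rat) (act : G -> M -> M)
  (Mdisc : dmodule (@wholeG G) act) (Mfg : fin_gen (@wholeG G) act)
  (Mproj : projective (@wholeG G) act)
  (FM : filling (@wholeG G) act (fun _ => True))
  (N : M -> Prop) (Nsum : direct_summand H act N) (Nfg : fin_gen_sub H act N)
  (FN : filling H act N) :
  norm_equiv (fnorm FM) (fnorm FN) N.
Proof.
have [pi [piL [piE [piN piId]]]] := projection_onto_summand Mdisc Nsum.
have [s [sL [sE sS]]] := equivariant_section Mdisc FM Mproj.
have [L [_ HL]] := Nfg.
apply: norm_equiv_of_dominates.
- by move=> v _; exact: (fnorm_ge0 FM (v := v) I).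
- by move=> v Nv; exact: fnorm_ge0 Nv.
- exact: fnorm_M_dominated.
- by apply: (fnorm_N_dominated HH Mdisc FN sL sE sS piL piE piN piId HL).
Qed.
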